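(* Let $S=(G,P,\Lambda,I)$ be a completely simple semigroup with non-singular sandwich matrix $P$, and suppose the group $G$ is an equational domain in the group language $\mathcal{L}_G$. Then the set $M=\{(x,y)\in S^2\mid x=(1,1_G,1)\text{ or }y=(1,1_G,1)\}$ is algebraic over $S$ in the language $\mathcal{L}_S$.
   Context: Rees representation: a completely simple semigroup $S=(G,P,\Lambda,I)$ is given by a group $G$, index sets $\Lambda,I$ (each containing an element $1$), and a matrix $P=(p_{i\lambda})_{i\in I,\lambda\in\Lambda}$ over $G$ normalised so that $p_{1\lambda}=p_{i1}=1_G$; elements are triples $(\lambda,g,i)$ with product $(\lambda,g,i)(\mu,h,j)=(\lambda,gp_{i\mu}h,j)$ and inversion $(\lambda,g,i)^{-1}=(\lambda,p_{i\lambda}^{-1}g^{-1}p_{i\lambda}^{-1},i)$. $P$ is non-singular if it has no two equal rows and no two equal columns. The language $\mathcal{L}_S$ is $\{\cdot,{}^{-1}\}$ plus a constant for each element of $S$; the group language $\mathcal{L}_G$ is $\{\cdot,{}^{-1},1\}$ plus a constant for each element of $G$. A subset is algebraic if it is the solution set of a system of equations (equalities of terms) in the relevant language; a structure is an equational domain (e.d.) if every finite union of algebraic sets is algebraic. (Equivalently, a group $G$ is an e.d. in $\mathcal{L}_G$ iff it has no zero-divisors, where $x\ne1$ is a zero-divisor if there is $y\ne 1$ with $[x,gyg^{-1}]=1$ for all $g\in G$.) *)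

From mathcomp Require Import all_boot.
Set Implicit Arguments. Unset Strict Implicit. Unset Printing Implicit Defensive.

Record AGroup := {
  gcarrier :> Type;
  gmul : gcarrier -> gcarrier -> gcarrier;
  ginv : gcarrier -> gcarrier;
  gone : gcarrier;
  gmulA : forall x y z, gmul x (gmul y z) = gmul (gmul x y) z;
  gmul1 : forall x, gmul gone x = x;
  gmulV : forall x, gmul (ginv x) x = gone
}.

Definition algebraic (X V T : Type) (ev : (V -> X) -> T -> X)
    (A : (V -> X) -> Prop) : Prop :=
  exists E : T * T -> Prop,
    forall p : V -> X, A p <-> (forall e, E e -> ev p e.1 = ev p e.2).

Inductive gterm (C V : Type) :=
  | gt_var : V -> gterm C V
  | gt_const : C -> gterm C V
  | gt_one : gterm C V
  | gt_mul : gterm C V -> gterm C V -> gterm C V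
  | gt_inv : gterm C V -> gterm C V.

Fixpoint gterm_eval (G : AGroup) (V : Type) (p : V -> G) (t : gterm G V) : G :=
  match t with
  | gt_var v => p v
  | gt_const c => c
  | gt_one => gone G
  | gt_mul t1 t2 => gmul (gterm_eval p t1) (gterm_eval p t2)
  | gt_inv t1 => ginv (gterm_eval p t1)
  end.

Definition group_ed (G : AGroup) : Prop :=
  forall (n k : nat) (A : 'I_k.+1 -> ('I_n -> G) -> Prop),
    (forall j, algebraic (@gterm_eval G 'I_n) (A j)) ->
    algebraic (@gterm_eval G 'I_n) (fun p => exists j, A j p).

Definition rees (G : AGroup) (Lam I : Type) : Type := (Lam * G * I)%type.

Definition rees_mul (G : AGroup) (Lam I : Type) (P : I -> Lam -> G)
    (x y : rees G Lam I) : rees G Lam I :=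
  let '(l, g, i) := x in let '(m, h, j) := y in
  (l, gmul (gmul g (P i m)) h, j).

Definition rees_inv (G : AGroup) (Lam I : Type) (P : I -> Lam -> G)
    (x : rees G Lam I) : rees G Lam I :=
  let '(l, g, i) := x in
  (l, gmul (gmul (ginv (P i l)) (ginv g)) (ginv (P i l)), i).

Definition normalised (G : AGroup) (Lam I : Type) (l1 : Lam) (i1 : I)
    (P : I -> Lam -> G) : Prop :=
  (forall l, P i1 l = gone G) /\ (forall i, P i l1 = gone G).

Definition nonsingular (G : AGroup) (Lam I : Type) (P : I -> Lam -> G) : Prop :=
  (forall i j : I, (forall l, P i l = P j l) -> i = j) /\
  (forall l m : Lam, (forall i, P i l = P i m) -> l = m).

Inductive sterm (C V : Type) :=
  | st_var : V -> sterm C V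
  | st_const : C -> sterm C V
  | st_mul : sterm C V -> sterm C V -> sterm C V
  | st_inv : sterm C V -> sterm C V.

Fixpoint sterm_eval (G : AGroup) (Lam I : Type) (P : I -> Lam -> G) (V : Type)
    (p : V -> rees G Lam I) (t : sterm (rees G Lam I) V) : rees G Lam I :=
  match t with
  | st_var v => p v
  | st_const c => c
  | st_mul t1 t2 => rees_mul P (sterm_eval P p t1) (sterm_eval P p t2)
  | st_inv t1 => rees_inv P (sterm_eval P p t1)
  end.

From mathcomp Require Import all_boot.
From Stdlib Require Import Classical.
Set Implicit Arguments. Unset Strict Implicit.

(* For x = (lam, g, j), the "sandwich" (1, 1_G, i) x (m, 1_G, 1) equals
   (1, p_{i lam} g p_{j m}, 1); by normalisation and non-singularity, x is
   e = (1, 1_G, 1) iff all these middle entries are 1_G.  So M is the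
   intersection, over all choices of (i, m) for each coordinate, of preimages
   of the set {a = 1 or b = 1} in G^2 under pairs of sandwiches.  That set is
   algebraic since G is an equational domain; its preimages are algebraic
   because sandwiches are semigroup terms and {(1, g, 1)} is a copy of G in S,
   so group equations become semigroup equations; and algebraic sets are
   closed under arbitrary intersections. *)

Lemma gmulVr (G : AGroup) (x : G) : gmul x (ginv x) = gone G.
Proof.
transitivity (gmul (gmul (ginv (ginv x)) (ginv x)) (gmul x (ginv x))).
  by rewrite gmulV gmul1.
by rewrite -gmulA (gmulA (ginv x)) gmulV gmul1 gmulV.
Qed.

Lemma gmulr1 (G : AGroup) (x : G) : gmul x (gone G) = x.
Proof. by rewrite -(gmulV x) gmulA gmulVr gmul1. Qed.

Lemma ginv1 (G : AGroup) : ginv (gone G) = gone G.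
Proof. by rewrite -[ginv _]gmulr1 gmulV. Qed.

Lemma algebraic_ext (X V T : Type) (ev : (V -> X) -> T -> X)
    (A B : (V -> X) -> Prop) :
  (forall p, A p <-> B p) -> algebraic ev A -> algebraic ev B.
Proof. by move=> eqAB [E HE]; exists E => p; rewrite -eqAB. Qed.

(* Taking the union of all defining systems needs no choice: each equation
   carries a system that defines one of the sets. *)
Lemma algebraic_bigcap (X V T K : Type) (ev : (V -> X) -> T -> X)
    (A : K -> (V -> X) -> Prop) :
  (forall k, algebraic ev (A k)) -> algebraic ev (fun p => forall k, A k p).
Proof.
move=> algA.
exists (fun e => exists k (E : T * T -> Prop),
  (forall p, A k p <-> (forall e, E e -> ev p e.1 = ev p e.2)) /\ E e).
move=> p; split.
- by move=> Ap e [k [E [HE Ee]]]; move/HE: (Ap k); apply.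
- move=> Hp k; have [E HE] := algA k; apply/HE => e Ee.
  by apply: Hp; exists k, E.
Qed.

Lemma forall_ord2_or (X : Type) (A B : X -> Prop) :
  (forall f : 'I_2 -> X, A (f ord0) \/ B (f ord_max)) <->
  (forall x, A x) \/ (forall x, B x).
Proof.
split; last by case=> H f; [left | right].
move=> H; case: (classic (forall x, A x)) => [|/not_all_ex_not [a Na]].
  by left.
by right=> b; case: (H (fun j => if j == ord0 then a else b)).
Qed.

Lemma algebraic_coord_one (G : AGroup) (n : nat) (j : 'I_n) :
  algebraic (@gterm_eval G 'I_n) (fun q => q j = gone G).
Proof.
exists (fun e => e = (gt_var _ j, gt_one _ _)) => q; split.
- by move=> Hq _ ->.
- by move=> H; apply: (H _ erefl).
Qed.

Lemma algebraic_coord_one_or (G : AGroup) :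
  group_ed G ->
  algebraic (@gterm_eval G 'I_2)
    (fun q => q ord0 = gone G \/ q ord_max = gone G).
Proof.
move=> Ged; apply: algebraic_ext (Ged 2 1 _ (@algebraic_coord_one G 2)) => q.
split; first by case=> -[[|[|//]] ?] /= Hq; [left | right];
  rewrite -Hq; congr q; apply: val_inj.
by case=> Hq; eexists; exact: Hq.
Qed.

Section ReesSemigroup.

Variables (G : AGroup) (Lam I : Type) (l1 : Lam) (i1 : I) (P : I -> Lam -> G).

Local Notation S := (rees G Lam I).
Local Notation embed g := ((l1, g, i1) : S).

Fixpoint sterm_of_gterm (V W : Type) (s : V -> sterm S W) (t : gterm G V)
    : sterm S W :=
  match t with
  | gt_var v => s v
  | gt_const c => st_const W (embed c)
  | gt_one => st_const W (embed (gone G))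
  | gt_mul a b => st_mul (sterm_of_gterm s a) (sterm_of_gterm s b)
  | gt_inv a => st_inv (sterm_of_gterm s a)
  end.

Hypothesis P11 : P i1 l1 = gone G.

Lemma sterm_of_gterm_eval (V W : Type) (s : V -> sterm S W) (p : W -> S)
    (q : V -> G) :
  (forall v, sterm_eval P p (s v) = embed (q v)) ->
  forall t, sterm_eval P p (sterm_of_gterm s t) = embed (gterm_eval q t).
Proof.
move=> Hs; elim=> [v|c||a IHa b IHb|a IHa] //=.
- by rewrite IHa IHb /= P11 gmulr1.
- by rewrite IHa /= P11 ginv1 gmulr1 gmul1.
Qed.

Lemma algebraic_gterm_preimage (V W : Type) (s : V -> sterm S W)
    (q : (W -> S) -> V -> G) (A : (V -> G) -> Prop) :
  (forall p v, sterm_eval P p (s v) = embed (q p v)) ->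
  algebraic (@gterm_eval G V) A ->
  algebraic (@sterm_eval G Lam I P W) (fun p => A (q p)).
Proof.
move=> Hs [E HE].
exists (fun e => exists eg, E eg /\
  e = (sterm_of_gterm s eg.1, sterm_of_gterm s eg.2)) => p.
rewrite HE; split.
- by move=> Hq _ [eg [Eeg ->]] /=; rewrite !(sterm_of_gterm_eval (Hs p)) Hq.
- move=> Hp eg Eeg.
  have := Hp _ (ex_intro _ eg (conj Eeg erefl)).
  by rewrite /= !(sterm_of_gterm_eval (Hs p)); case.
Qed.

Definition sandwich (im : I * Lam) (x : S) : G :=
  (rees_mul P (rees_mul P (l1, gone G, im.1) x) (im.2, gone G, i1)).1.2.

Definition sandwich_term (W : Type) (im : I * Lam) (w : W) : sterm S W :=
  st_mul (st_mul (st_const W (l1, gone G, im.1)) (st_var S w))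
         (st_const W (im.2, gone G, i1)).

Lemma sandwich_termE (W : Type) (p : W -> S) im w :
  sterm_eval P p (sandwich_term im w) = embed (sandwich im (p w)).
Proof. by rewrite /sandwich /=; case: (p w) => [[l g] j]. Qed.

Lemma eq_rees_one_sandwich (x : S) :
  normalised l1 i1 P -> nonsingular P ->
  x = embed (gone G) <-> forall im, sandwich im x = gone G.
Proof.
case=> Prow Pcol [Pinj_row Pinj_col]; case: x => [[l g] j]; split.
  by case=> -> -> -> [i m]; rewrite /sandwich /= Pcol Prow !gmulr1 ?gmul1.
move=> H.
have g1 : g = gone G.
  by move: (H (i1, l1)); rewrite /sandwich /= Prow Pcol !gmulr1 ?gmul1.
have -> : l = l1.
  apply: Pinj_col => i.
  by move: (H (i, l1)); rewrite /sandwich /= !Pcol g1 !gmulr1 ?gmul1.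
have -> : j = i1.
  apply: Pinj_row => m.
  by move: (H (i1, m)); rewrite /sandwich /= !Prow g1 !gmulr1 ?gmul1.
by rewrite g1.
Qed.

Lemma algebraic_sandwich_one_or (f : 'I_2 -> I * Lam) :
  group_ed G ->
  algebraic (@sterm_eval G Lam I P 'I_2) (fun p =>
    sandwich (f ord0) (p ord0) = gone G \/
    sandwich (f ord_max) (p ord_max) = gone G).
Proof.
move=> Ged.
apply: (algebraic_gterm_preimage (s := fun j => sandwich_term (f j) j)
  (q := fun p j => sandwich (f j) (p j))) (algebraic_coord_one_or Ged).
by move=> p j; apply: sandwich_termE.
Qed.

End ReesSemigroup.

Theorem mainTheorem6 (G : AGroup) (Lam I : Type) (l1 : Lam) (i1 : I)
    (P : I -> Lam -> G)
    (HPnorm : normalised l1 i1 P)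
    (HPns : nonsingular P)
    (HGed : group_ed G) :
  algebraic (@sterm_eval G Lam I P 'I_2)
    (fun p : 'I_2 -> rees G Lam I =>
       p ord0 = (l1, gone G, i1) \/ p ord_max = (l1, gone G, i1)).
Proof.
have P11 : P i1 l1 = gone G by case: HPnorm.
apply: algebraic_ext
  (algebraic_bigcap (fun f => algebraic_sandwich_one_or P11 f HGed)) => p.
rewrite !(eq_rees_one_sandwich _ HPnorm HPns).
exact: (forall_ord2_or (fun im => sandwich l1 i1 P im (p ord0) = gone G)
                       (fun im => sandwich l1 i1 P im (p ord_max) = gone G)).
Qed.
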